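(* Let $H=\sum_{a=1}^m\lambda_aE_a$ be a $k$-local Hamiltonian and $G=\sum_{b=1}^{m'}\kappa_bF_b$ a $k'$-local Hamiltonian. Then, for a universal implied constant, $$\|[H,G]\|_{2,\mathrm{loc}}\lesssim k'k\,\|H\|_{1,\mathrm{loc}}\|G\|_{2,\mathrm{loc}},\qquad \|[H,G]\|_F\lesssim k'k\,\|H\|_{1,\mathrm{loc}}\|G\|_F.$$
   Context: $\mathcal{P}$ denotes the set of $n$-qubit tensor products of Pauli matrices; $\mathrm{supp}(P)$ is the set of qubits on which $P$ acts non-trivially. A $k$-local Hamiltonian is $H=\sum_a\lambda_aE_a$ with real $\lambda_a$ and distinct non-identity Paulis $E_a$ with $|\mathrm{supp}(E_a)|\le k$. For any operator $A=\sum_{X\in\mathcal{P}}\xi_XX$ (Pauli expansion, possibly complex coefficients), $\|A\|_{1,\mathrm{loc}}=\max_{i\in[n]}\sum_{X:\,i\in\mathrm{supp}(X)}|\xi_X|$ and $\|A\|_{2,\mathrm{loc}}=\max_{i\in[n]}\big(\sum_{X:\,i\in\mathrm{supp}(X)}|\xi_X|^2\big)^{1/2}$. $\|\cdot\|_F$ is the Frobenius norm and $\lesssim$ hides a universal constant. *)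

From mathcomp Require Import all_boot all_order all_algebra.
From mathcomp Require Import reals complex.
Set Implicit Arguments. Unset Strict Implicit. Unset Printing Implicit Defensive.
Import Order.TTheory GRing.Theory Num.Theory.
Local Open Scope ring_scope.
Local Open Scope complex_scope.

Definition bits (n : nat) := {ffun 'I_n -> bool}.

(** Operators on the n-qubit Hilbert space (C^2)^{(x) n}, as matrices
    indexed by computational basis states. *)
Definition op (R : realType) (n : nat) := bits n -> bits n -> R[i].

Section Ops.
Variables (R : realType) (n : nat).
Local Notation C := R[i].
Local Notation op := (op R n).

Definition op_add (A B : op) : op := fun x y => A x y + B x y.
Definition op_scale (c : C) (A : op) : op := fun x y => c * A x y.
Definition op_zero : op := fun _ _ => 0.
Definition op_mul (A B : op) : op := fun x y => \sum_(z : bits n) A x z * B z y.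
Definition commutator (A B : op) : op := op_add (op_mul A B) (op_scale (-1) (op_mul B A)).
Definition trace (A : op) : C := \sum_(x : bits n) A x x.

Definition frob (A : op) : R :=
  Num.sqrt (\sum_(x : bits n) \sum_(y : bits n) Normc.normc (A x y) ^+ 2).

(** n-qubit Pauli strings: 0 = I, 1 = X, 2 = Y, 3 = Z on each qubit. *)
Definition pauli := {ffun 'I_n -> 'I_4}.
Definition supp (P : pauli) : {set 'I_n} := [set i | nat_of_ord (P i) != 0%N].

Definition sigma (p : 'I_4) (a b : bool) : C :=
  match nat_of_ord p with
  | 0%N => if a == b then 1 else 0
  | 1%N => if a != b then 1 else 0
  | 2%N => if a == b then 0 else if a then 'i else - 'i
  | _ => if a == b then (if a then -1 else 1) else 0
  end.

Definition pmat (P : pauli) : op := fun x y => \prod_(i : 'I_n) sigma (P i) (x i) (y i).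

(** Pauli-expansion coefficient: A = sum_X xi_X X with xi_X = 2^{-n} tr(X A). *)
Definition pcoef (A : op) (X : pauli) : C := (2 ^+ n)^-1 * trace (op_mul (pmat X) A).

(** local norms ||A||_{1,loc}, ||A||_{2,loc} (maximum over qubits; 0 if n = 0) *)
Definition norm1loc (A : op) : R :=
  \big[Num.max/0]_(i : 'I_n) \sum_(X : pauli | i \in supp X) Normc.normc (pcoef A X).
Definition norm2loc (A : op) : R :=
  \big[Num.max/0]_(i : 'I_n)
     Num.sqrt (\sum_(X : pauli | i \in supp X) Normc.normc (pcoef A X) ^+ 2).

Definition ham (m : nat) (lam : 'I_m -> R) (E : 'I_m -> pauli) : op :=
  fun x y => \sum_(a < m) (lam a)%:C * pmat (E a) x y.

(** (lam, E) describe a k-local Hamiltonian: distinct, non-identity Paulis of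
    support size at most k (real coefficients are built into the type of lam). *)
Definition k_local (k m : nat) (E : 'I_m -> pauli) : Prop :=
  injective E /\ (forall a, supp (E a) != set0) /\ (forall a, (#|supp (E a)| <= k)%N).
End Ops.

From mathcomp Require Import all_boot all_order all_algebra.
From mathcomp Require Import reals complex boolp.
From mathcomp Require Import ring lra zify.
Set Implicit Arguments. Unset Strict Implicit. Unset Printing Implicit Defensive.
Import Order.TTheory GRing.Theory Num.Theory.
Local Open Scope ring_scope.
Local Open Scope complex_scope.

(* Expanding both Hamiltonians in the Pauli basis, [H, G] is the sum over pairs (a, b) of
   lam_a kap_b (phi(E_a, F_b) - phi(F_b, E_a)) W_ab, where E_a F_b = phi(E_a, F_b) W_ab; a pair
   contributes only if E_a and F_b anticommute on a common qubit ("clash").  The coefficient of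
   a Pauli string Z is thus at most the sum of 2 |lam_a| |kap_b| over the clashing pairs with
   W_ab = Z, and weighted Cauchy-Schwarz bounds its square by (sum |lam_a|) (4 sum |lam_a| kap_b^2).
   For fixed Z and a at most one b qualifies, and then E_a meets supp Z, which has at most
   k + k' <= 2 k k' qubits; so the first factor is at most 2 k k' ||H||_1loc.  Summed over the Z
   whose support contains a qubit i, the second factor charges each clashing pair with i in
   supp E_a or in supp F_b once, and counting overlaps qubit by qubit bounds it by
   (k + k') ||H||_1loc ||G||_2loc^2.  Summed over all Z it is at most k' ||H||_1loc sum_b kap_b^2,
   and Parseval for the Pauli basis turns this into the Frobenius bound. *)

Section SingleQubit.
Variable R : realType.
Local Notation C := R[i].
Implicit Types p q : 'I_4.

Local Ltac case4 p := case: p => [[|[|[|[|?]]]] ?] //.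

Lemma lxor_lt4 p q : (Nat.lxor p q < 4)%N.
Proof. by case4 p; case4 q. Qed.

(* With the labels 0 = I, 1 = X, 2 = Y, 3 = Z, the product of two Pauli
   matrices is, up to a phase, the Pauli matrix labelled by the bitwise xor. *)
Definition qmul p q : 'I_4 := Ordinal (lxor_lt4 p q).

(* The phase is i when (p, q) follows the cyclic order X -> Y -> Z -> X. *)
Definition qphase p q : C :=
  if (p == ord0) || (q == ord0) || (p == q) then 1
  else if q == (p %% 3).+1 :> nat then 'i else - 'i.

Lemma sigma_mul p q a b :
  \sum_(c : bool) sigma R p a c * sigma R q c b = qphase p q * sigma R (qmul p q) a b.
Proof.
rewrite big_bool; case4 p; case4 q; case: a; case: b; rewrite /sigma /qphase /qmul /=;
  rewrite ?mulr0 ?mul0r ?mulr1 ?mul1r ?addr0 ?add0r ?mulrN ?mulNr ?opprK //.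
all: by simpc.
Qed.

Lemma qmulC p q : qmul p q = qmul q p.
Proof. by case4 p; case4 q; apply/val_inj. Qed.

Lemma qmul_eq0 p q : (qmul p q == ord0) = (p == q).
Proof. by case4 p; case4 q. Qed.

Lemma qmulK p : involutive (qmul p).
Proof. by move=> q; case4 p; case4 q; apply/val_inj. Qed.

Lemma qmulI p : injective (qmul p).
Proof. exact: inv_inj (qmulK p). Qed.

Lemma qmul_neq0 p q : qmul p q != ord0 -> (p != ord0) || (q != ord0).
Proof. by case4 p; case4 q. Qed.

Lemma qphasexx p : qphase p p = 1.
Proof. by rewrite /qphase eqxx !orbT. Qed.

Lemma qphaseC p q : (p == ord0) || (q == ord0) || (p == q) -> qphase p q = qphase q p.
Proof. by case4 p; case4 q. Qed.

Lemma normc_qphase p q : Normc.normc (qphase p q) = 1.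
Proof.
have normci : Normc.normc ('i : C) = 1 by rewrite /= expr0n /= add0r expr1n sqrtr1.
by rewrite /qphase; case: ifP => _; [exact: Normc.normc1 | case: ifP; rewrite ?normcN].
Qed.

Lemma sum_sigma_diag p : \sum_(c : bool) sigma R p c c = if p == ord0 then 2 else 0.
Proof. by rewrite big_bool; case4 p; rewrite /sigma /= ?addrN ?addr0 // addNr. Qed.

Lemma conjc_sigma p a b : (sigma R p a b)^* = sigma R p b a.
Proof. by case4 p; case: a; case: b; rewrite /sigma /= ?conjc1 ?conjc0 //; simpc. Qed.

End SingleQubit.

Section PauliStrings.
Variables (R : realType) (n : nat).
Local Notation C := R[i].
Local Notation pmat := (@pmat R n).
Implicit Types P Q X : pauli n.

Definition pmul P Q : pauli n := [ffun i => qmul (P i) (Q i)].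
Definition pphase P Q : C := \prod_i qphase R (P i) (Q i).

Definition clash P Q : bool :=
  [exists i, [&& P i != ord0, Q i != ord0 & P i != Q i]].

Lemma in_supp P i : (i \in supp P) = (P i != ord0).
Proof. by rewrite inE. Qed.

Lemma pmulC P Q : pmul P Q = pmul Q P.
Proof. by apply/ffunP => i; rewrite !ffunE qmulC. Qed.

Lemma pmulI P : injective (pmul P).
Proof.
move=> Q Q' /ffunP eqPQ; apply/ffunP => i.
by apply: (@qmulI (P i)); move: (eqPQ i); rewrite !ffunE.
Qed.

Lemma supp_pmul P Q : supp (pmul P Q) \subset supp P :|: supp Q.
Proof. by apply/subsetP => i; rewrite in_setU !in_supp ffunE => /qmul_neq0. Qed.

Lemma pphasexx P : pphase P P = 1.
Proof. by rewrite /pphase big1 // => i _; rewrite qphasexx. Qed.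

Lemma pphaseC P Q : ~~ clash P Q -> pphase P Q = pphase Q P.
Proof.
rewrite negb_exists => /forallP noclash; apply: eq_bigr => i _; apply: qphaseC.
by move: (noclash i); rewrite !negb_and !negbK orbA.
Qed.

Lemma normc_pphase P Q : Normc.normc (pphase P Q) = 1.
Proof.
rewrite /pphase (big_morph _ (@Normc.normcM R) (@Normc.normc1 R)).
by rewrite big1 // => i _; rewrite normc_qphase.
Qed.

Lemma clash_meet P Q : clash P Q -> ~~ [disjoint supp P & supp Q].
Proof.
case/existsP => i /and3P [Pi Qi _]; apply/negP => dis.
have iP : i \in supp P by rewrite in_supp.
by move: (disjointFr dis iP); rewrite in_supp Qi.
Qed.

Lemma clash_meet_pmul P Q : clash P Q -> ~~ [disjoint supp (pmul P Q) & supp P].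
Proof.
case/existsP => i /and3P [Pi _ PQi]; apply/negP => dis.
have iPQ : i \in supp (pmul P Q) by rewrite in_supp ffunE qmul_eq0.
by move: (disjointFr dis iPQ); rewrite in_supp Pi.
Qed.

Lemma pmat_mul P Q x y :
  op_mul (pmat P) (pmat Q) x y = pphase P Q * pmat (pmul P Q) x y.
Proof.
rewrite /op_mul /pmat /pphase -big_split /=.
under eq_bigr do rewrite ffunE -sigma_mul.
rewrite bigA_distr_bigA /=; apply: eq_bigr => z _.
by rewrite -big_split.
Qed.

Lemma trace_pmat P : trace (pmat P) = \prod_i (if P i == ord0 then 2 else 0).
Proof.
rewrite /trace /pmat; under [RHS]eq_bigr do rewrite -sum_sigma_diag.
by rewrite bigA_distr_bigA.
Qed.

Lemma trace_mul_pmat P Q : trace (op_mul (pmat P) (pmat Q)) = if P == Q then 2 ^+ n else 0.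
Proof.
rewrite /trace; under eq_bigr do rewrite pmat_mul.
rewrite -mulr_sumr -/(trace _) trace_pmat.
have [<-|neqPQ] := eqVneq P Q.
  rewrite pphasexx mul1r (eq_bigr (fun=> 2)) => [|i _]; last by rewrite ffunE qmul_eq0 eqxx.
  by rewrite prodr_const card_ord.
have : ~~ [forall i, P i == Q i].
  by apply: contra neqPQ => /forallP eqPQ; apply/eqP/ffunP => i; apply/eqP.
rewrite negb_forall => /existsP [i neqPQi].
by rewrite (bigD1 i) //= ffunE qmul_eq0 (negbTE neqPQi) mul0r mulr0.
Qed.

Lemma conjc_pmat P x y : (pmat P x y)^* = pmat P y x.
Proof. by rewrite /pmat rmorph_prod; apply: eq_bigr => i _; exact: conjc_sigma. Qed.

End PauliStrings.

Arguments pphase {R n} P Q.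

Section ComplexNorm.
Variable R : realType.
Local Notation C := R[i].
Local Notation normc := (@Normc.normc R).

Lemma normc_ge0 (z : C) : 0 <= normc z.
Proof. by case: z => a b; exact: sqrtr_ge0. Qed.

Lemma normc_real (r : R) : normc r%:C = `|r|.
Proof. by rewrite /Normc.normc /= expr0n /= addr0 sqrtr_sqr. Qed.

Lemma normc_sqr (z : C) : (normc z ^+ 2)%:C = z * z^*.
Proof.
case: z => a b; rewrite /Normc.normc sqr_sqrtr ?addr_ge0 ?sqr_ge0 //.
by simpc; rewrite -!expr2 [b * a]mulrC addNr.
Qed.

Lemma normc_sum (I : finType) (P : pred I) (F : I -> C) :
  normc (\sum_(i | P i) F i) <= \sum_(i | P i) normc (F i).
Proof.
elim/big_rec2: _ => [|i y1 y2 _ IH]; first by rewrite Normc.normc0.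
by apply: le_trans (le_normcD _ _) _; rewrite lerD2l.
Qed.

End ComplexNorm.

Section PauliSums.
Variables (R : realType) (n : nat).
Local Notation C := R[i].
Local Notation op := (op R n).
Local Notation pmat := (@pmat R n).
Local Notation normc := (@Normc.normc R).

Definition psum (J : finType) (w : J -> C) (P : J -> pauli n) : op :=
  fun x y => \sum_j w j * pmat (P j) x y.

Lemma hamE m (lam : 'I_m -> R) (E : 'I_m -> pauli n) : ham lam E = psum (fun a => (lam a)%:C) E.
Proof. by []. Qed.

Lemma pcoef_psum (J : finType) (w : J -> C) P X : pcoef (psum w P) X = \sum_(j | P j == X) w j.
Proof.
rewrite /pcoef.
have -> : trace (op_mul (pmat X) (psum w P)) = \sum_j w j * trace (op_mul (pmat X) (pmat (P j))).
  rewrite /trace /op_mul /psum; under [RHS]eq_bigr do rewrite mulr_sumr.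
  rewrite [RHS]exchange_big; apply: eq_bigr => x _ /=.
  under eq_bigr do rewrite mulr_sumr.
  rewrite exchange_big; apply: eq_bigr => j _ /=.
  by rewrite mulr_sumr; apply: eq_bigr => z _; rewrite mulrCA.
rewrite mulr_sumr [RHS]big_mkcond /=; apply: eq_bigr => j _.
rewrite trace_mul_pmat eq_sym; case: eqP => _; last by rewrite !mulr0.
by rewrite mulrCA mulVf ?mulr1 // expf_neq0 // pnatr_eq0.
Qed.

Lemma sum_pcoef_psum_inj (J : finType) (w : J -> C) P (D : pred (pauli n)) (g : C -> R) :
  injective P -> g 0 = 0 ->
  \sum_(X | D X) g (pcoef (psum w P) X) = \sum_(j | D (P j)) g (w j).
Proof.
move=> injP g0; rewrite [RHS](partition_big P D) //; apply: eq_bigr => X DX.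
rewrite pcoef_psum; have [j0 /eqP PjX | noP] := pickP (fun j => P j == X).
  have fiber : forall D' : pred J, D' j0 -> (fun j => D' j && (P j == X)) =1 pred1 j0.
    move=> D' D'j0 j; rewrite -PjX (inj_eq injP) /=.
    by case: eqVneq => [->|_]; rewrite ?D'j0 ?andbF.
  rewrite (big_pred1 j0 (fiber predT isT)) (big_pred1 j0 (fiber (D \o P) _)) //=.
  by rewrite PjX.
by rewrite !big_pred0 // => j; rewrite noP ?andbF.
Qed.

Lemma psum_collect (J : finType) (w : J -> C) P :
  psum w P = psum (fun X => \sum_(j | P j == X) w j) id.
Proof.
apply/funext => x; apply/funext => y; rewrite /psum (partition_big P predT) //=.
by apply: eq_bigr => X _; rewrite mulr_suml; apply: eq_bigr => j /eqP ->.
Qed.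

Lemma op_mul_psum (J K : finType) (w : J -> C) P (v : K -> C) Q :
  op_mul (psum w P) (psum v Q) =
  psum (fun jk => w jk.1 * v jk.2 * pphase (P jk.1) (Q jk.2)) (fun jk => pmul (P jk.1) (Q jk.2)).
Proof.
apply/funext => x; apply/funext => y; rewrite /op_mul /psum /=.
transitivity (\sum_j \sum_k w j * v k * pphase (P j) (Q k) * pmat (pmul (P j) (Q k)) x y);
  last by rewrite pair_bigA.
under eq_bigr do rewrite mulr_suml.
rewrite exchange_big; apply: eq_bigr => j _ /=.
under eq_bigr do rewrite mulr_sumr.
rewrite exchange_big; apply: eq_bigr => k _ /=.
rewrite -mulrA -pmat_mul /op_mul mulr_sumr; apply: eq_bigr => z _.
by rewrite mulrACA.
Qed.

Lemma commutator_psum (J K : finType) (w : J -> C) P (v : K -> C) Q :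
  commutator (psum w P) (psum v Q) =
  psum (fun jk => w jk.1 * v jk.2 * (pphase (P jk.1) (Q jk.2) - pphase (Q jk.2) (P jk.1)))
       (fun jk => pmul (P jk.1) (Q jk.2)).
Proof.
rewrite /commutator !op_mul_psum; apply/funext => x; apply/funext => y.
rewrite /op_add /op_scale /psum (reindex (fun jk : J * K => (jk.2, jk.1))) /=; last first.
  by exists (fun kj : K * J => (kj.2, kj.1)) => -[].
rewrite mulr_sumr -big_split /=; apply: eq_bigr => jk _.
rewrite [pmul (Q _) _]pmulC; ring.
Qed.

Lemma sum_pmat_conj P Q : \sum_x \sum_y pmat P x y * (pmat Q x y)^* = if P == Q then 2 ^+ n else 0.
Proof.
rewrite -trace_mul_pmat; apply: eq_bigr => x _; apply: eq_bigr => y _.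
by congr (_ * _); exact: conjc_pmat.
Qed.

Lemma frob_psum_inj_sqr (J : finType) (w : J -> C) P :
  injective P -> frob (psum w P) ^+ 2 = 2 ^+ n * \sum_j normc (w j) ^+ 2.
Proof.
move=> injP; rewrite /frob sqr_sqrtr; last by do 2!(apply: sumr_ge0 => ? _); exact: sqr_ge0.
have expand x y : (normc (psum w P x y) ^+ 2)%:C =
    \sum_j \sum_l w j * (w l)^* * (pmat (P j) x y * (pmat (P l) x y)^*).
  rewrite normc_sqr /psum rmorph_sum mulr_suml; apply: eq_bigr => j _.
  by rewrite mulr_sumr; apply: eq_bigr => l _; rewrite rmorphM; ring.
apply: complexI; rewrite rmorphM rmorphXn rmorph_nat !rmorph_sum /=.
under eq_bigr do rewrite rmorph_sum /=.
under eq_bigr do under eq_bigr do rewrite expand.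
under eq_bigr do rewrite exchange_big /=.
rewrite exchange_big /= mulr_sumr; apply: eq_bigr => j _.
under eq_bigr do rewrite exchange_big /=.
rewrite exchange_big /=.
under eq_bigr do under eq_bigr do rewrite -mulr_sumr.
under eq_bigr do rewrite -mulr_sumr sum_pmat_conj (inj_eq injP).
rewrite (bigD1 j) //= big1 ?addr0 => [|l /negbTE nlj]; last by rewrite eq_sym nlj mulr0.
by rewrite eqxx normc_sqr mulrC.
Qed.

Lemma frob_psum_sqr (J : finType) (w : J -> C) P :
  frob (psum w P) ^+ 2 = 2 ^+ n * \sum_X normc (pcoef (psum w P) X) ^+ 2.
Proof.
rewrite [in LHS]psum_collect frob_psum_inj_sqr //.
by congr (_ * _); apply: eq_bigr => X _; rewrite pcoef_psum.
Qed.

End PauliSums.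

Section RealSums.
Variable R : realType.

Lemma ler_sum_subcond (I : finType) (P Q : pred I) (F : I -> R) :
  (forall i, P i -> Q i) -> (forall i, Q i -> 0 <= F i) ->
  \sum_(i | P i) F i <= \sum_(i | Q i) F i.
Proof.
move=> PQ F0; rewrite [X in _ <= X](bigID P) /= (eq_bigl P) => [|i]; last exact: andb_idl (PQ i).
by rewrite lerDl; apply: sumr_ge0 => i /andP [/F0].
Qed.

Lemma cauchy_schwarz_weighted (I : finType) (P : pred I) (u v : I -> R) :
  (forall i, P i -> 0 <= u i) ->
  (\sum_(i | P i) u i * v i) ^+ 2 <= (\sum_(i | P i) u i) * \sum_(i | P i) u i * v i ^+ 2.
Proof.
move=> u0.
have sqrE : (\sum_(i | P i) u i * v i) ^+ 2 = \sum_(i | P i) \sum_(j | P j) u i * v i * (u j * v j).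
  by rewrite expr2 mulr_suml; apply: eq_bigr => i _; rewrite mulr_sumr.
have prodE : (\sum_(i | P i) u i) * (\sum_(i | P i) u i * v i ^+ 2) =
    \sum_(i | P i) \sum_(j | P j) u i * (u j * v j ^+ 2).
  by rewrite mulr_suml; apply: eq_bigr => i _; rewrite mulr_sumr.
have prodE' : (\sum_(i | P i) u i) * (\sum_(i | P i) u i * v i ^+ 2) =
    \sum_(i | P i) \sum_(j | P j) u j * (u i * v i ^+ 2).
  by rewrite prodE exchange_big.
(* Twice the difference of the two sides is the sum of the u i * u j * (v i - v j) ^+ 2. *)
rewrite -(@ler_pM2l _ 2) // !mulr_natl !mulr2n {1}prodE prodE' sqrE -!big_split /=.
apply: ler_sum => i Pi; rewrite -!big_split /=; apply: ler_sum => j Pj.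
have := mulr_ge0 (mulr_ge0 (u0 i Pi) (u0 j Pj)) (sqr_ge0 (v i - v j)); nra.
Qed.

Lemma sum_meet_le (I T : finType) (S : {set T}) (U : I -> {set T}) (f : I -> R) (B : R) (K : nat) :
  (forall a, 0 <= f a) -> 0 <= B -> (forall t, \sum_(a | t \in U a) f a <= B) -> (#|S| <= K)%N ->
  \sum_(a | ~~ [disjoint S & U a]) f a <= K%:R * B.
Proof.
move=> f0 B0 locB SK.
apply: le_trans (_ : \sum_(t in S) \sum_(a | t \in U a) f a <= _).
  rewrite (exchange_big_dep predT) //= big_mkcond /=; apply: ler_sum => a _.
  case: ifPn => [|_]; last by apply: sumr_ge0.
  rewrite -setI_eq0 => /set0Pn [t]; rewrite inE => tSU.
  by rewrite (bigD1 t) //= lerDl; apply: sumr_ge0.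
apply: le_trans (_ : \sum_(t in S) B <= _); first exact: ler_sum.
by rewrite sumr_const -[X in X <= _]mulr_natl; apply: ler_wpM2r; rewrite // ler_nat.
Qed.

Lemma sum_pair_dep_le_fst (I J : finType) (P : pred I) (Q : I -> pred J)
    (u : I -> R) (v : J -> R) (B : R) :
  (forall a, 0 <= u a) -> (forall a, P a -> \sum_(b | Q a b) v b <= B) ->
  \sum_(ab | P ab.1 && Q ab.1 ab.2) u ab.1 * v ab.2 <= (\sum_(a | P a) u a) * B.
Proof.
move=> u0 QB; rewrite -(pair_big_dep P Q (fun a b => u a * v b)) mulr_suml.
by apply: ler_sum => a Pa; rewrite -mulr_sumr; apply: ler_wpM2l; [exact: u0 | exact: QB].
Qed.

Lemma sum_pair_dep_le_snd (I J : finType) (P : pred J) (Q : I -> pred J)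
    (u : I -> R) (v : J -> R) (B : R) :
  (forall b, 0 <= v b) -> (forall b, P b -> \sum_(a | Q a b) u a <= B) ->
  \sum_(ab | P ab.2 && Q ab.1 ab.2) u ab.1 * v ab.2 <= (\sum_(b | P b) v b) * B.
Proof.
move=> v0 QB; rewrite (reindex (fun ba : J * I => (ba.2, ba.1))) /=; last first.
  by exists (fun ab : I * J => (ab.2, ab.1)) => -[].
under eq_bigr do rewrite mulrC.
exact: (sum_pair_dep_le_fst (Q := fun b a => Q a b)).
Qed.

End RealSums.

Section LocalNorms.
Variables (R : realType) (n : nat).
Local Notation C := R[i].
Local Notation normc := (@Normc.normc R).

Lemma norm1loc_psum_ge (J : finType) (w : J -> C) (P : J -> pauli n) i :
  injective P -> \sum_(j | i \in supp (P j)) normc (w j) <= norm1loc (psum w P).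
Proof.
move=> injP; rewrite -(sum_pcoef_psum_inj w (fun X => i \in supp X) (g := normc)) //;
  last exact: Normc.normc0.
exact: (le_bigmax 0 (fun j => \sum_(X | j \in supp X) normc (pcoef (psum w P) X))).
Qed.

Lemma norm2loc_psum_ge (J : finType) (w : J -> C) (P : J -> pauli n) i :
  injective P -> \sum_(j | i \in supp (P j)) normc (w j) ^+ 2 <= norm2loc (psum w P) ^+ 2.
Proof.
move=> injP;
  rewrite -(sum_pcoef_psum_inj w (fun X => i \in supp X) (g := fun z => normc z ^+ 2)) //;
  last by rewrite Normc.normc0 expr0n.
rewrite -[X in X <= _]sqr_sqrtr; last by apply: sumr_ge0 => X _; exact: sqr_ge0.
have N0 : 0 <= norm2loc (psum w P) by exact: bigmax_ge_id.
rewrite ler_sqr ?nnegrE ?sqrtr_ge0 //.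
exact: (le_bigmax 0 (fun j => Num.sqrt (\sum_(X | j \in supp X) normc (pcoef (psum w P) X) ^+ 2))).
Qed.

Lemma norm2loc_le (A : op R n) (B : R) : 0 <= B ->
  (forall i, \sum_(X | i \in supp X) normc (pcoef A X) ^+ 2 <= B ^+ 2) -> norm2loc A <= B.
Proof.
move=> B0 locB; apply: bigmax_le => // i _.
by rewrite -(ger0_norm B0) -sqrtr_sqr; exact: ler_wsqrtr.
Qed.

End LocalNorms.

Lemma k_local_inj n k m (E : 'I_m -> pauli n) : k_local k E -> injective E.
Proof. by case. Qed.

Lemma k_local_card n k m (E : 'I_m -> pauli n) a : k_local k E -> (0 < #|supp (E a)| <= k)%N.
Proof. by case=> _ [nz le]; rewrite card_gt0 nz le. Qed.

Lemma leq_mul_addn_sqr k k' : (8 * k * k' * (k + k') <= (4 * k' * k) ^ 2)%N.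
Proof. by case: k => [|k]; case: k' => [|k']; rewrite ?muln0 ?mul0n //; nia. Qed.

Section Commutator.
Variables (R : realType) (n k k' m m' : nat).
Variables (lam : 'I_m -> R) (E : 'I_m -> pauli n) (kap : 'I_m' -> R) (F : 'I_m' -> pauli n).
Hypotheses (hE : k_local k E) (hF : k_local k' F).
Local Notation C := R[i].
Local Notation normc := (@Normc.normc R).
Local Notation N1 := (norm1loc (ham lam E)).
Local Notation N2 := (norm2loc (ham kap F)).

Definition pauli_pair (ab : 'I_m * 'I_m') := pmul (E ab.1) (F ab.2).
Definition clash_pair (ab : 'I_m * 'I_m') := clash (E ab.1) (F ab.2).
Definition comm_coef (ab : 'I_m * 'I_m') : C :=
  (lam ab.1)%:C * (kap ab.2)%:C * (pphase (E ab.1) (F ab.2) - pphase (F ab.2) (E ab.1)).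
Definition weight (Z : pauli n) : R :=
  \sum_(ab | (pauli_pair ab == Z) && clash_pair ab) `|lam ab.1| * `|kap ab.2| ^+ 2.

Lemma commutator_hamE : commutator (ham lam E) (ham kap F) = psum comm_coef pauli_pair.
Proof. exact: commutator_psum. Qed.

Lemma norm1loc_ham_ge0 : 0 <= N1. Proof. exact: bigmax_ge_id. Qed.
Lemma norm2loc_ham_ge0 : 0 <= N2. Proof. exact: bigmax_ge_id. Qed.

Lemma sum_supp_lam_le i : \sum_(a | i \in supp (E a)) `|lam a| <= N1.
Proof.
under eq_bigr do rewrite -normc_real.
exact: norm1loc_psum_ge (k_local_inj hE).
Qed.

Lemma sum_supp_kap_le i : \sum_(b | i \in supp (F b)) `|kap b| ^+ 2 <= N2 ^+ 2.
Proof.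
under eq_bigr do rewrite -normc_real.
exact: norm2loc_psum_ge (k_local_inj hF).
Qed.

Lemma frob_ham_sqr : frob (ham kap F) ^+ 2 = 2 ^+ n * \sum_b `|kap b| ^+ 2.
Proof.
rewrite hamE frob_psum_inj_sqr; last exact: k_local_inj hF.
by under eq_bigr do rewrite normc_real.
Qed.

Lemma comm_coef_noclash ab : ~~ clash_pair ab -> comm_coef ab = 0.
Proof. by move=> /pphaseC eq_phase; rewrite /comm_coef eq_phase subrr mulr0. Qed.

Lemma normc_comm_coef_le ab : normc (comm_coef ab) <= `|lam ab.1| * (2 * `|kap ab.2|).
Proof.
have phase_le : normc (pphase (E ab.1) (F ab.2) - pphase (F ab.2) (E ab.1)) <= 2.
  by apply: le_trans (le_normcD _ _) _; rewrite normcN !normc_pphase.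
rewrite !Normc.normcM !normc_real -mulrA; apply: ler_wpM2l => //.
by rewrite mulrC; apply: ler_wpM2r.
Qed.

Lemma normc_pcoef_comm_le Z :
  normc (pcoef (psum comm_coef pauli_pair) Z)
  <= \sum_(ab | (pauli_pair ab == Z) && clash_pair ab) `|lam ab.1| * (2 * `|kap ab.2|).
Proof.
rewrite pcoef_psum (bigID clash_pair) /= [X in _ + X]big1 ?addr0;
  last by move=> ab /andP [_ /comm_coef_noclash].
apply: le_trans; first exact: normc_sum.
by apply: ler_sum => ab _; exact: normc_comm_coef_le.
Qed.

Lemma sum_fiber_fst_le Z a :
  \sum_(ab | ((pauli_pair ab == Z) && clash_pair ab) && (ab.1 == a)) `|lam ab.1|
  <= (if ~~ [disjoint supp Z & supp (E a)] then `|lam a| else 0).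
Proof.
have [ab0 /andP [/andP [/eqP WZ cl] /eqP ab0a] | none] :=
  pickP (fun ab => ((pauli_pair ab == Z) && clash_pair ab) && (ab.1 == a)); last first.
  by rewrite big_pred0 //; case: ifP.
have fiber : (fun ab => ((pauli_pair ab == Z) && clash_pair ab) && (ab.1 == a)) =1 pred1 ab0.
  move=> ab /=; apply/idP/eqP => [/andP [/andP [/eqP Wab _] /eqP aba] | ->]; last first.
    by rewrite WZ eqxx cl ab0a eqxx.
  have eq1 : ab.1 = ab0.1 by rewrite aba ab0a.
  have eq2 : ab.2 = ab0.2.
    by apply: (k_local_inj hF); apply: (@pmulI _ (E ab.1)); rewrite -/(pauli_pair ab) Wab eq1 -WZ.
  by rewrite (surjective_pairing ab) (surjective_pairing ab0) eq1 eq2.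
have meet : ~~ [disjoint supp Z & supp (E a)] by rewrite -WZ -ab0a; exact: clash_meet_pmul.
by rewrite (big_pred1 ab0 fiber) /= ab0a meet.
Qed.

Lemma sum_fiber_lam_le Z :
  \sum_(ab | (pauli_pair ab == Z) && clash_pair ab) `|lam ab.1| <= (2 * k * k')%:R * N1.
Proof.
have [ab0 /andP [/eqP WZ _] | none] := pickP (fun ab => (pauli_pair ab == Z) && clash_pair ab);
  last by rewrite big_pred0 // mulr_ge0 ?norm1loc_ham_ge0.
have /andP [kE kE'] := k_local_card ab0.1 hE.
have /andP [kF kF'] := k_local_card ab0.2 hF.
have cardZ : (#|supp Z| <= k + k')%N.
  rewrite -WZ; apply: leq_trans (subset_leq_card (supp_pmul _ _)) _.
  exact: leq_trans (leq_card_setU _ _).1 (leq_add kE' kF').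
rewrite (partition_big fst predT) //=.
apply: le_trans (_ : \sum_a (if ~~ [disjoint supp Z & supp (E a)] then `|lam a| else 0) <= _).
  by apply: ler_sum => a _; exact: sum_fiber_fst_le.
rewrite -big_mkcond /=; apply: le_trans (_ : (k + k')%:R * N1 <= _).
  apply: sum_meet_le => [a | | t |];
    [exact: normr_ge0 | exact: norm1loc_ham_ge0 | exact: sum_supp_lam_le | exact: cardZ].
by apply: ler_wpM2r; [exact: norm1loc_ham_ge0 | rewrite ler_nat; nia].
Qed.

Lemma sqr_normc_pcoef_comm_le Z :
  normc (pcoef (psum comm_coef pauli_pair) Z) ^+ 2 <= (8 * k * k')%:R * N1 * weight Z.
Proof.
have sum_ge0 :
    0 <= \sum_(ab | (pauli_pair ab == Z) && clash_pair ab) `|lam ab.1| * (2 * `|kap ab.2|).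
  by apply: sumr_ge0 => ab _; rewrite !mulr_ge0.
apply: le_trans (_ : (\sum_(ab | (pauli_pair ab == Z) && clash_pair ab)
                        `|lam ab.1| * (2 * `|kap ab.2|)) ^+ 2 <= _).
  by rewrite ler_sqr ?nnegrE ?normc_ge0 //; exact: normc_pcoef_comm_le.
apply: le_trans; first by apply: cauchy_schwarz_weighted => ab _; exact: normr_ge0.
have -> : \sum_(ab | (pauli_pair ab == Z) && clash_pair ab) `|lam ab.1| * (2 * `|kap ab.2|) ^+ 2
          = 4 * weight Z.
  by rewrite /weight mulr_sumr; apply: eq_bigr => ab _; rewrite exprMn; ring.
have weight_ge0 : 0 <= weight Z by apply: sumr_ge0 => ab _; rewrite mulr_ge0 ?sqr_ge0.
have -> : (8 * k * k')%:R * N1 * weight Z = (2 * k * k')%:R * N1 * (4 * weight Z).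
  by rewrite !natrM; ring.
by apply: ler_wpM2r; [rewrite mulr_ge0 | exact: sum_fiber_lam_le].
Qed.

Lemma sum_sqr_pcoef_comm_le (h : pred (pauli n)) :
  \sum_(Z | h Z) normc (pcoef (psum comm_coef pauli_pair) Z) ^+ 2
  <= (8 * k * k')%:R * N1 * \sum_(Z | h Z) weight Z.
Proof. by rewrite mulr_sumr; apply: ler_sum => Z _; exact: sqr_normc_pcoef_comm_le. Qed.

Lemma sum_weight_eq (h : pred (pauli n)) :
  \sum_(Z | h Z) weight Z
  = \sum_(ab | h (pauli_pair ab) && clash_pair ab) `|lam ab.1| * `|kap ab.2| ^+ 2.
Proof.
rewrite [RHS](partition_big pauli_pair h) => [|ab /andP [] //].
apply: eq_bigr => Z hZ; apply: eq_bigl => ab /=.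
apply/idP/idP => [/andP [/eqP eqZ cl] | /andP [/andP [_ cl] /eqP eqZ]].
  by rewrite eqZ hZ cl eqxx.
by rewrite eqZ eqxx cl.
Qed.

Lemma sum_clash_kap_le a : \sum_(b | clash (E a) (F b)) `|kap b| ^+ 2 <= k%:R * N2 ^+ 2.
Proof.
apply: le_trans (ler_sum_subcond (Q := fun b => ~~ [disjoint supp (E a) & supp (F b)]) _ _) _.
- by move=> b; exact: clash_meet.
- by move=> b _; exact: sqr_ge0.
apply: sum_meet_le => [b | | t |]; [exact: sqr_ge0 | exact: sqr_ge0 | exact: sum_supp_kap_le |].
by have /andP [] := k_local_card a hE.
Qed.

Lemma sum_clash_lam_le b : \sum_(a | clash (E a) (F b)) `|lam a| <= k'%:R * N1.
Proof.
apply: le_trans (ler_sum_subcond (Q := fun a => ~~ [disjoint supp (F b) & supp (E a)]) _ _) _.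
- by move=> a /clash_meet; rewrite disjoint_sym.
- by move=> a _; exact: normr_ge0.
apply: sum_meet_le => [a | | t |];
  [exact: normr_ge0 | exact: norm1loc_ham_ge0 | exact: sum_supp_lam_le |].
by have /andP [] := k_local_card b hF.
Qed.

Lemma sum_weight_supp_le i :
  \sum_(Z | i \in supp Z) weight Z <= (k + k')%:R * N1 * N2 ^+ 2.
Proof.
have N2_ge0 : 0 <= N2 ^+ 2 by exact: sqr_ge0.
have sumE : \sum_(ab | (i \in supp (E ab.1)) && clash_pair ab) `|lam ab.1| * `|kap ab.2| ^+ 2
            <= N1 * (k%:R * N2 ^+ 2).
  apply: le_trans (sum_pair_dep_le_fst (P := fun a => i \in supp (E a))
                     (fun a => normr_ge0 (lam a)) (fun a _ => sum_clash_kap_le a)) _.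
  by apply: ler_wpM2r; [rewrite mulr_ge0 | exact: sum_supp_lam_le].
have sumF : \sum_(ab | (i \in supp (F ab.2)) && clash_pair ab) `|lam ab.1| * `|kap ab.2| ^+ 2
            <= N2 ^+ 2 * (k'%:R * N1).
  apply: le_trans (sum_pair_dep_le_snd (P := fun b => i \in supp (F b))
                     (fun b => sqr_ge0 `|kap b|) (fun b _ => sum_clash_lam_le b)) _.
  by apply: ler_wpM2r; [rewrite mulr_ge0 ?norm1loc_ham_ge0 | exact: sum_supp_kap_le].
have -> : (k + k')%:R * N1 * N2 ^+ 2 = N1 * (k%:R * N2 ^+ 2) + N2 ^+ 2 * (k'%:R * N1).
  by rewrite natrD; ring.
rewrite sum_weight_eq; apply: le_trans (lerD sumE sumF).
rewrite [X in X <= _]big_mkcond [X in _ <= X + _]big_mkcond [X in _ <= _ + X]big_mkcond.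
rewrite -big_split /=.
apply: ler_sum => ab _; have t0 : 0 <= `|lam ab.1| * `|kap ab.2| ^+ 2 by rewrite mulr_ge0 ?sqr_ge0.
case: ifPn => [/andP [/(subsetP (supp_pmul _ _)) + cl] | _]; last by rewrite addr_ge0 //; case: ifP.
by rewrite in_setU cl !andbT => /orP [] ->; [rewrite lerDl | rewrite lerDr]; case: ifP.
Qed.

Lemma sum_weight_le : \sum_Z weight Z <= k'%:R * N1 * \sum_b `|kap b| ^+ 2.
Proof.
rewrite (sum_weight_eq predT) mulrC.
exact: (sum_pair_dep_le_snd (P := predT)
         (fun b => sqr_ge0 `|kap b|) (fun b _ => sum_clash_lam_le b)).
Qed.

Lemma norm2loc_commutator_le :
  norm2loc (commutator (ham lam E) (ham kap F)) <= 4%:R * k'%:R * k%:R * N1 * N2.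
Proof.
have N1_ge0 := norm1loc_ham_ge0; have N2_ge0 := norm2loc_ham_ge0.
rewrite commutator_hamE; apply: norm2loc_le => [|i]; first by rewrite !mulr_ge0.
apply: le_trans; first exact: sum_sqr_pcoef_comm_le.
apply: le_trans; first by apply: ler_wpM2l; [rewrite mulr_ge0 | exact: sum_weight_supp_le].
have -> : (8 * k * k')%:R * N1 * ((k + k')%:R * N1 * N2 ^+ 2)
          = (8 * k * k' * (k + k'))%:R * (N1 * N2) ^+ 2 by rewrite !natrM natrD; ring.
have -> : (4%:R * k'%:R * k%:R * N1 * N2) ^+ 2
          = ((4 * k' * k) ^ 2)%:R * (N1 * N2) ^+ 2 by rewrite natrX !natrM; ring.
by apply: ler_wpM2r; [exact: sqr_ge0 | rewrite ler_nat leq_mul_addn_sqr].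
Qed.

Lemma frob_commutator_le :
  frob (commutator (ham lam E) (ham kap F)) <= 4%:R * k'%:R * k%:R * N1 * frob (ham kap F).
Proof.
have N1_ge0 := norm1loc_ham_ge0.
have S_ge0 : 0 <= \sum_b `|kap b| ^+ 2 by apply: sumr_ge0 => b _; exact: sqr_ge0.
have bound_ge0 : 0 <= 4%:R * k'%:R * k%:R * N1 * frob (ham kap F).
  by rewrite !mulr_ge0 // sqrtr_ge0.
rewrite -ler_sqr ?nnegrE ?sqrtr_ge0 // exprMn frob_ham_sqr commutator_hamE frob_psum_sqr.
apply: le_trans (_ : 2 ^+ n * ((8 * k * k')%:R * N1 * (k'%:R * N1 * \sum_b `|kap b| ^+ 2)) <= _).
  apply: ler_wpM2l; first exact: exprn_ge0.
  apply: le_trans; first exact: sum_sqr_pcoef_comm_le.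
  by apply: ler_wpM2l; [rewrite mulr_ge0 | exact: sum_weight_le].
have -> : 2 ^+ n * ((8 * k * k')%:R * N1 * (k'%:R * N1 * \sum_b `|kap b| ^+ 2))
          = (8 * k * k' * k')%:R * (2 ^+ n * N1 ^+ 2 * \sum_b `|kap b| ^+ 2).
  by rewrite !natrM; ring.
have -> : (4%:R * k'%:R * k%:R * N1) ^+ 2 * (2 ^+ n * \sum_b `|kap b| ^+ 2)
          = ((4 * k' * k) ^ 2)%:R * (2 ^+ n * N1 ^+ 2 * \sum_b `|kap b| ^+ 2)
  by rewrite natrX !natrM; ring.
apply: ler_wpM2r; first by rewrite !mulr_ge0 ?exprn_ge0 ?sqr_ge0.
by rewrite ler_nat; apply: leq_trans (leq_mul_addn_sqr k k'); nia.
Qed.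

End Commutator.

Theorem lemma3p9 :
  exists c : nat,
  forall (R : realType) (n k k' m m' : nat)
         (lam : 'I_m -> R) (E : 'I_m -> pauli n)
         (kap : 'I_m' -> R) (F : 'I_m' -> pauli n),
    k_local k E -> k_local k' F ->
    let H := ham lam E in
    let G := ham kap F in
    norm2loc (commutator H G)
      <= c%:R * k'%:R * k%:R * norm1loc H * norm2loc G
    /\ frob (commutator H G)
      <= c%:R * k'%:R * k%:R * norm1loc H * frob G.
Proof.
exists 4%N => R n k k' m m' lam E kap F hE hF H G.
by split; [exact: norm2loc_commutator_le hE hF | exact: frob_commutator_le hE hF].
Qed.
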